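(* Let $N(n)$ be the number of inflection points of the Hilbert curve $H_n$. Then $N(1)=4$, $N(2k)=4N(2k-1)-2$ and $N(2k+1)=4N(2k)-4$ for all $k\ge1$, and hence $$N(n)=\begin{cases}\dfrac{4^{n+1}+4}{5}, & n \text{ odd},\\[2mm] \dfrac{4^{n+1}+6}{5}, & n\text{ even}.\end{cases}$$
   Context: The Hilbert curve at step $n$ is the polygon $H_n$ in the unit square defined recursively: $H_1$ has vertices $(\tfrac14,\tfrac14),(\tfrac14,\tfrac34),(\tfrac34,\tfrac34),(\tfrac34,\tfrac14)$; $H_{n+1}$ is the concatenation (in this order, joined by the connecting edges) of $f_1(H_n),f_2(H_n),f_3(H_n),f_4(H_n)$, where $f_1(x,y)=(\tfrac y2,\tfrac x2)$, $f_2(x,y)=(\tfrac x2,\tfrac y2+\tfrac12)$, $f_3(x,y)=(\tfrac x2+\tfrac12,\tfrac y2+\tfrac12)$, $f_4(x,y)=(1-\tfrac y2,\tfrac12-\tfrac x2)$, each copy traversed in the order inherited from $H_n$. The inflection points of $H_n$ are the vertices of $H_n$, in order, after deleting every interior vertex whose two neighbouring vertices are collinear with it (endpoints are kept). *)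

From HB Require Import structures.
From mathcomp Require Import all_boot all_order all_algebra.
Set Implicit Arguments. Unset Strict Implicit. Unset Printing Implicit Defensive.
Import Order.TTheory GRing.Theory Num.Theory.

Local Open Scope ring_scope.

Definition pt := (rat * rat)%type.

Definition f1 (p : pt) : pt := (p.2 / 2, p.1 / 2).
Definition f2 (p : pt) : pt := (p.1 / 2, p.2 / 2 + 1 / 2).
Definition f3 (p : pt) : pt := (p.1 / 2 + 1 / 2, p.2 / 2 + 1 / 2).
Definition f4 (p : pt) : pt := (1 - p.2 / 2, 1 / 2 - p.1 / 2).

Definition H1 : seq pt :=
  [:: (1/4, 1/4); (1/4, 3/4); (3/4, 3/4); (3/4, 1/4)].

(* Hilbert n = the vertex list of H_n for n >= 1 (H_0 is unused, set to [::]). *)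
Fixpoint Hilbert (n : nat) : seq pt :=
  match n with
  | 0%N => [::]
  | m.+1 =>
    match m with
    | 0%N => H1
    | _ => map f1 (Hilbert m) ++ map f2 (Hilbert m) ++ map f3 (Hilbert m)
             ++ map f4 (Hilbert m)
    end
  end.

Definition collinear (a b c : pt) : bool :=
  (b.1 - a.1) * (c.2 - a.2) - (b.2 - a.2) * (c.1 - a.1) == 0.

Definition keep (s : seq pt) (i : nat) : bool :=
  [|| i == 0%N, i == (size s).-1 |
      ~~ collinear (nth (0, 0) s i.-1) (nth (0, 0) s i) (nth (0, 0) s i.+1)].

Definition inflection_points (s : seq pt) : seq pt :=
  [seq nth (0, 0) s i | i <- iota 0 (size s) & keep s i].

Definition N (n : nat) : nat := size (inflection_points (Hilbert n)).

(* H_(n+1) consists of four copies of H_n under affine bijections, which preserve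
   collinearity, so every turn inside a copy survives and the only new triples of
   consecutive vertices are the six straddling the three seams between copies.
   These are determined by the two first and two last vertices of H_n, which are
   (e,e), (e,3e) or (3e,e) and (1-e,3e) or (1-3e,e), (1-e,e) with e = 2^-(n+1),
   the choice alternating with the parity of n: the seams add 4 turns for odd n
   and 2 for even n.  Counting the two endpoints, N(n+1) = 4 (N(n) - 2) + 2 + 4
   or + 2, and the closed form follows by induction. *)

From mathcomp Require Import all_boot all_order all_algebra.
From mathcomp Require Import ring zify.
Set Implicit Arguments. Unset Strict Implicit. Unset Printing Implicit Defensive.
Import Order.TTheory GRing.Theory Num.Theory.

Local Open Scope ring_scope.

Definition det (a b c : pt) : rat :=
  (b.1 - a.1) * (c.2 - a.2) - (b.2 - a.2) * (c.1 - a.1).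

Lemma collinear_scaled k e a b c : e != 0 -> det a b c = k * e ^+ 2 ->
  collinear a b c = (k == 0).
Proof.
move=> en0 detE; rewrite /collinear -/(det a b c) detE mulf_eq0.
by rewrite expf_eq0 (negbTE en0) orbF.
Qed.
Arguments collinear_scaled k [e a b c].

Definition affine (a b c d p q : rat) (x : pt) : pt :=
  (a * x.1 + b * x.2 + p, c * x.1 + d * x.2 + q).

Lemma det_affine a b c d p q x y z :
  det (affine a b c d p q x) (affine a b c d p q y) (affine a b c d p q z) =
  (a * d - b * c) * det x y z.
Proof. by rewrite /det /affine /=; ring. Qed.

Definition preserves_collinear (f : pt -> pt) :=
  forall x y z, collinear (f x) (f y) (f z) = collinear x y z.

Lemma affine_preserves_collinear f a b c d p q :
  f =1 affine a b c d p q -> a * d - b * c != 0 -> preserves_collinear f.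
Proof.
move=> fE nz x y z; rewrite /collinear -/(det x y z) !fE.
by rewrite -/(det _ _ _) det_affine mulf_eq0 (negbTE nz).
Qed.

Lemma f1_collinear : preserves_collinear f1.
Proof.
apply: (@affine_preserves_collinear _ 0 (1/2) (1/2) 0 0 0) => // -[x y].
by rewrite /f1 /affine /=; congr (_, _); ring.
Qed.

Lemma f2_collinear : preserves_collinear f2.
Proof.
apply: (@affine_preserves_collinear _ (1/2) 0 0 (1/2) 0 (1/2)) => // -[x y].
by rewrite /f2 /affine /=; congr (_, _); ring.
Qed.

Lemma f3_collinear : preserves_collinear f3.
Proof.
apply: (@affine_preserves_collinear _ (1/2) 0 0 (1/2) (1/2) (1/2)) => // -[x y].
by rewrite /f3 /affine /=; congr (_, _); ring.
Qed.

Lemma f4_collinear : preserves_collinear f4.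
Proof.
apply: (@affine_preserves_collinear _ 0 (-1/2) (-1/2) 0 1 (1/2)) => // -[x y].
by rewrite /f4 /affine /=; congr (_, _); field.
Qed.

Fixpoint turns (s : seq pt) : nat :=
  if s is a :: s' then
    ((if s' is b :: c :: _ then ~~ collinear a b c else false) + turns s')%N
  else 0%N.

Definition turn_at (s : seq pt) (i : nat) : bool :=
  ~~ collinear (nth (0, 0) s i) (nth (0, 0) s i.+1) (nth (0, 0) s i.+2).

Lemma turns_count s : turns s = count (turn_at s) (iota 0 (size s - 2)).
Proof.
elim: s => [|a s IHs] //; case: s IHs => [|b [|c s]] //= IHs.
rewrite IHs subn2 /= -add1n iotaDl count_map.
by congr (_ + _)%N; apply: eq_count.
Qed.

Lemma size_inflection_points s :
  (2 <= size s)%N -> size (inflection_points s) = (turns s + 2)%N.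
Proof.
move=> s_ge2; rewrite size_map size_filter turns_count.
have [k sizeE] : exists k, size s = k.+2 by exists (size s - 2)%N; lia.
have -> : iota 0 (size s) = 0 :: rcons (iota 1 k) k.+1.
  by rewrite sizeE -cats1 -(iotaD 1 k 1) addn1.
rewrite sizeE subn2 /= -cats1 count_cat /= -add1n iotaDl count_map.
rewrite (@eq_in_count _ _ (turn_at s)) /=; first by rewrite /keep sizeE /= eqxx; lia.
move=> i; rewrite mem_iota add0n => /andP[_ lt_ik].
by rewrite /keep sizeE /= add1n eqSS (ltn_eqF lt_ik).
Qed.

Lemma turns_map f s : preserves_collinear f -> turns (map f s) = turns s.
Proof.
move=> fP; elim: s => [|a s IHs] //=; rewrite IHs.
by case: s {IHs} => [|b [|c s]] //=; rewrite fP.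
Qed.

Definition starts_with (s : seq pt) (u v : pt) := exists t, s = u :: v :: t.
Definition ends_with (s : seq pt) (x y : pt) := exists t, s = t ++ [:: x; y].

Lemma starts_with_map f s u v :
  starts_with s u v -> starts_with (map f s) (f u) (f v).
Proof. by move=> [t ->]; exists (map f t). Qed.

Lemma starts_with_cat s t u v : starts_with s u v -> starts_with (s ++ t) u v.
Proof. by move=> [r ->]; exists (r ++ t). Qed.

Lemma ends_with_map f s x y : ends_with s x y -> ends_with (map f s) (f x) (f y).
Proof. by move=> [t ->]; exists (map f t); rewrite map_cat. Qed.

Lemma ends_with_cat s t x y : ends_with t x y -> ends_with (s ++ t) x y.
Proof. by move=> [r ->]; exists (s ++ r); rewrite catA. Qed.

Definition seam_turns (x y u v : pt) : nat :=
  (~~ collinear x y u) + (~~ collinear y u v).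

Lemma turns_cat s1 s2 x y u v :
  ends_with s1 x y -> starts_with s2 u v ->
  turns (s1 ++ s2) = (turns s1 + seam_turns x y u v + turns s2)%N.
Proof.
move=> [t1 ->] [t2 ->]; rewrite -catA /seam_turns /=.
elim: t1 => [|a t1 IHt] /=; first by rewrite !addn0 !addnA.
rewrite IHt !addnA; congr (_ + _ + _ + _)%N.
by case: t1 {IHt} => [|b [|c t1]].
Qed.

Definition hilbert_start (e : rat) : pt := (e, e).
Definition hilbert_second (up : bool) (e : rat) : pt :=
  if up then (e, 3 * e) else (3 * e, e).
Definition hilbert_penult (up : bool) (e : rat) : pt :=
  if up then (1 - e, 3 * e) else (1 - 3 * e, e).
Definition hilbert_end (e : rat) : pt := (1 - e, e).

Definition margin (n : nat) : rat := (2 ^+ n.+1)^-1.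

Lemma margin_neq0 n : margin n != 0.
Proof. by rewrite invr_eq0 expf_neq0. Qed.

Lemma marginS n : margin n.+1 = margin n / 2.
Proof. by rewrite /margin exprS invfM mulrC. Qed.

Lemma f1_hilbert_start e : f1 (hilbert_start e) = hilbert_start (e / 2).
Proof. by []. Qed.

Lemma f1_hilbert_second up e :
  f1 (hilbert_second up e) = hilbert_second (~~ up) (e / 2).
Proof. by case: up; rewrite /f1 /=; congr (_, _); field. Qed.

Lemma f4_hilbert_penult up e :
  f4 (hilbert_penult up e) = hilbert_penult (~~ up) (e / 2).
Proof. by case: up; rewrite /f4 /=; congr (_, _); field. Qed.

Lemma f4_hilbert_end e : f4 (hilbert_end e) = hilbert_end (e / 2).
Proof. by rewrite /f4 /=; congr (_, _); field. Qed.

Lemma HilbertSS n : Hilbert n.+2 =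
  map f1 (Hilbert n.+1) ++ map f2 (Hilbert n.+1) ++ map f3 (Hilbert n.+1)
  ++ map f4 (Hilbert n.+1).
Proof. by []. Qed.

Lemma Hilbert_ends n :
  starts_with (Hilbert n.+1) (hilbert_start (margin n.+1))
    (hilbert_second (odd n.+1) (margin n.+1)) /\
  ends_with (Hilbert n.+1) (hilbert_penult (odd n.+1) (margin n.+1))
    (hilbert_end (margin n.+1)).
Proof.
elim: n => [|n [hs he]].
  split; [exists [:: (3/4, 3/4); (3/4, 1/4)] | exists [:: (1/4, 1/4); (1/4, 3/4)]];
    by rewrite /= /H1; congr [:: _, _, _ & _]; congr (_, _); apply/eqP.
rewrite HilbertSS marginS -[odd n.+2]/(~~ odd n.+1); split.
  rewrite -f1_hilbert_start -f1_hilbert_second.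
  exact/starts_with_cat/starts_with_map.
rewrite -f4_hilbert_penult -f4_hilbert_end.
by do 3 apply: ends_with_cat; apply: ends_with_map.
Qed.

Section Seams.

Variables (up : bool) (e : rat).
Hypothesis en0 : e != 0.

Lemma seam_turns_f1_f2 :
  seam_turns (f1 (hilbert_penult up e)) (f1 (hilbert_end e))
             (f2 (hilbert_start e)) (f2 (hilbert_second up e)) = 1%N.
Proof.
rewrite /seam_turns; case: up.
- by rewrite (collinear_scaled (-1) en0) ?(collinear_scaled 0 en0) //;
    rewrite /det /=; field.
- by rewrite (collinear_scaled 0 en0) ?(collinear_scaled (-1) en0) //;
    rewrite /det /=; field.
Qed.

Lemma seam_turns_f2_f3 :
  seam_turns (f2 (hilbert_penult up e)) (f2 (hilbert_end e))
             (f3 (hilbert_start e)) (f3 (hilbert_second up e)) =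
  if up then 2%N else 0%N.
Proof.
rewrite /seam_turns; case: up.
- by rewrite (collinear_scaled 1 en0) ?(collinear_scaled 1 en0) //;
    rewrite /det /=; field.
- by rewrite (collinear_scaled 0 en0) ?(collinear_scaled 0 en0) //;
    rewrite /det /=; field.
Qed.

Lemma seam_turns_f3_f4 :
  seam_turns (f3 (hilbert_penult up e)) (f3 (hilbert_end e))
             (f4 (hilbert_start e)) (f4 (hilbert_second up e)) = 1%N.
Proof.
rewrite /seam_turns; case: up.
- by rewrite (collinear_scaled 0 en0) ?(collinear_scaled (-1) en0) //;
    rewrite /det /=; field.
- by rewrite (collinear_scaled (-1) en0) ?(collinear_scaled 0 en0) //;
    rewrite /det /=; field.
Qed.

End Seams.

Local Close Scope ring_scope.

Lemma turns_HilbertSS n : turns (Hilbert n.+2) =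
  4 * turns (Hilbert n.+1) + (if odd n.+1 then 4 else 2).
Proof.
have [hs he] := Hilbert_ends n; have en0 := margin_neq0 n.+1.
rewrite HilbertSS.
rewrite (turns_cat (ends_with_map f1 he) (starts_with_cat _ (starts_with_map f2 hs))).
rewrite (turns_cat (ends_with_map f2 he) (starts_with_cat _ (starts_with_map f3 hs))).
rewrite (turns_cat (ends_with_map f3 he) (starts_with_map f4 hs)).
rewrite (seam_turns_f1_f2 _ en0) (seam_turns_f2_f3 _ en0) (seam_turns_f3_f4 _ en0).
rewrite !turns_map;
  [|exact: f4_collinear|exact: f3_collinear|exact: f2_collinear|exact: f1_collinear].
by case: (odd n.+1); lia.
Qed.

Lemma N_Hilbert n : N n.+1 = turns (Hilbert n.+1) + 2.
Proof.
have [[t ht] _] := Hilbert_ends n.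
by rewrite /N size_inflection_points // ht.
Qed.

Lemma NSS n : N n.+2 = 4 * N n.+1 - (if odd n.+1 then 2 else 4).
Proof. by rewrite !N_Hilbert turns_HilbertSS; case: (odd n.+1); lia. Qed.

Lemma N_closed_form n :
  5 * N n.+1 = 4 ^ n.+2 + (if odd n.+1 then 4 else 6).
Proof.
elim: n => [|n IHn]; first by rewrite N_Hilbert; vm_compute.
rewrite NSS expnS -[odd n.+2]/(~~ odd n.+1).
by move: IHn; case: (odd n.+1) => /= IHn; lia.
Qed.

Theorem mainTheorem9 :
  N 1 = 4 /\
  (forall k : nat, (1 <= k)%N ->
     N (2 * k) = (4 * N (2 * k - 1) - 2)%N /\
     N (2 * k + 1) = (4 * N (2 * k) - 4)%N) /\
  (forall n : nat, (1 <= n)%N ->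
     N n = (if odd n then (4 ^ n.+1 + 4) %/ 5 else (4 ^ n.+1 + 6) %/ 5)%N).
Proof.
split; first by have := N_closed_form 0; rewrite /=; lia.
split.
  case=> [|k] // _.
  have -> : 2 * k.+1 - 1 = (2 * k).+1 by lia.
  have -> : 2 * k.+1 + 1 = (2 * k).+3 by lia.
  have -> : 2 * k.+1 = (2 * k).+2 by lia.
  by rewrite !NSS /= oddM.
case=> [|n] // _.
by have := N_closed_form n; case: (odd n.+1) => <-; rewrite mulKn.
Qed.
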